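(* For $r\ge 2$, the friendship graph $F_r=W(3,r)$ admits a weak IASI and its sparing number is $r$.
   Context: The friendship graph $F_r$ is obtained by joining $r$ copies of the cycle $C_3$ at a single common vertex; equivalently it is the windmill graph $W(3,r)$ ($r$ copies of $K_3$ sharing one vertex). Let $\mathbb{N}_0$ be the set of non-negative integers; for $A,B\subseteq\mathbb{N}_0$, $A+B=\{a+b:a\in A,b\in B\}$. An integer additive set-indexer (IASI) of a graph $G$ is an injective map $f:V(G)\to\mathcal{P}(\mathbb{N}_0)$ such that $f^+:E(G)\to\mathcal{P}(\mathbb{N}_0)$, $f^+(uv)=f(u)+f(v)$, is injective. A weak IASI is an IASI with $|f^+(uv)|=\max(|f(u)|,|f(v)|)$ for every edge $uv$. An edge $e$ is mono-indexed if $|f^+(e)|=1$. The sparing number $\varphi(G)$ is the minimum number of mono-indexed edges over all weak IASIs of $G$. *)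

From mathcomp Require Import all_boot.
From mathcomp Require Import finmap.
Set Implicit Arguments. Unset Strict Implicit. Unset Printing Implicit Defensive.
Local Open Scope fset_scope.

(* Subsets of N0 are represented as finite sets of naturals. *)
Definition sumset (A B : {fset nat}) : {fset nat} :=
  [fset (a + b)%N | a in A, b in B].

(* A finite simple graph: vertex type V (a finType) with adjacency relation
   adj, assumed symmetric and irreflexive where needed. Edges are the
   unordered pairs [set u; v] with adj u v. *)
Definition is_edge (V : finType) (adj : rel V) (E : {set V}) : bool :=
  [exists u, exists v, adj u v && (E == [set u; v])].

Definition iasi (V : finType) (adj : rel V) (f : V -> {fset nat}) : Prop :=
  injective f /\
  (forall u v u' v' : V, adj u v -> adj u' v' ->
     sumset (f u) (f v) = sumset (f u') (f v') -> [set u; v] = [set u'; v']).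

Definition weak_iasi (V : finType) (adj : rel V) (f : V -> {fset nat}) : Prop :=
  iasi adj f /\
  (forall u v : V, adj u v ->
     #|` sumset (f u) (f v)| = maxn #|` f u| #|` f v|).

Definition mono_count (V : finType) (adj : rel V) (f : V -> {fset nat}) : nat :=
  #|[set E : {set V} | is_edge adj E &&
     [exists u, exists v, (E == [set u; v]) && adj u v &&
        (#|` sumset (f u) (f v)| == 1%N)]]|.

Definition is_sparing_number (V : finType) (adj : rel V) (k : nat) : Prop :=
  (exists f, weak_iasi adj f /\ mono_count adj f = k) /\
  (forall f, weak_iasi adj f -> (k <= mono_count adj f)%N).

(* Friendship graph F_r = W(3, r): vertex 0 is the common vertex, and for
   1 <= i <= r the i-th triangle is {0, 2i-1, 2i}. *)
Definition friendship_adj (r : nat) : rel 'I_(r.*2.+1) :=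
  fun u v => (u != v) &&
    [|| nat_of_ord u == 0%N, nat_of_ord v == 0%N
      | (nat_of_ord u).-1./2 == (nat_of_ord v).-1./2].
Arguments friendship_adj : clear implicits.

From mathcomp Require Import all_boot finmap zify.
Set Implicit Arguments. Unset Strict Implicit. Unset Printing Implicit Defensive.
Local Open Scope fset_scope.

(* If both ends of an edge carried labels with at least two elements, then with
   m = max f(u), n = max f(v) and some b < n in f(v), the sumset would contain
   the #|f(u)| elements a + b (a in f(u)) and also m + n, exceeding the weak
   bound.  So in a weak IASI at most one vertex of a triangle has a
   non-singleton label, and the edge between the two singleton-labelled
   vertices is mono-indexed.  The r blades of F_r are edge-disjoint triangles,
   which forces at least r mono-indexed edges.  Conversely, labelling the hub
   by {0, 1} and every other vertex v by {v} gives the edge sums {v, v+1} on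
   the spokes and {4k+3} on the k-th outer edge, all distinct, so exactly the
   r outer edges are mono-indexed. *)

Lemma sumsetP (A B : {fset nat}) x :
  reflect (exists2 a, a \in A & exists2 b, b \in B & x = (a + b)%N)
          (x \in sumset A B).
Proof. by apply: (iffP idP) => [/imfset2P | ?]; last apply/imfset2P. Qed.

Lemma sumsetC (A B : {fset nat}) : sumset A B = sumset B A.
Proof.
apply/fsetP => x; apply/sumsetP/sumsetP => -[a aA [b bB ->]];
  by exists b => //; exists a; rewrite // addnC.
Qed.

Lemma sumset0s (B : {fset nat}) : sumset fset0 B = fset0.
Proof. by apply/fsetP => x; rewrite inE; apply/sumsetP => -[a]. Qed.

Lemma sumsets0 (A : {fset nat}) : sumset A fset0 = fset0.
Proof. by rewrite sumsetC sumset0s. Qed.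

Lemma sumset1 (m n : nat) : sumset [fset m] [fset n] = [fset (m + n)%N].
Proof.
apply/fsetP => x; rewrite inE; apply/sumsetP/eqP => [[a + [b]]|->].
  by rewrite !inE => /eqP-> /eqP->.
by exists m; rewrite ?inE //; exists n; rewrite ?inE.
Qed.

Lemma sumset01 (n : nat) : sumset [fset 0%N; 1%N] [fset n] = [fset n; n.+1].
Proof.
apply/fsetP => x; rewrite !inE; apply/sumsetP/idP => [[a + [b]]|].
  by rewrite !inE => /orP[]/eqP-> /eqP-> ->; rewrite ?add0n ?add1n eqxx ?orbT.
by case/orP => /eqP->; [exists 0%N | exists 1%N]; rewrite ?inE ?eqxx ?orbT //;
  exists n; rewrite ?inE.
Qed.

Lemma fset_nat_max (A : {fset nat}) :
  A != fset0 -> exists2 m, m \in A & forall a, a \in A -> (a <= m)%N.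
Proof.
case: (fset_0Vmem A) => [->|[a0 a0A]]; first by rewrite eqxx.
have ubA a : a \in A -> (a <= \max_(x <- A) x)%N.
  by move=> aA; exact: (leq_bigmax_seq (F := id) _ aA).
by case: (ex_maxnP (ex_intro (fun a => a \in A) a0 a0A) ubA) => m; exists m.
Qed.

Lemma card_sumset_gtl (A B : {fset nat}) :
  A != fset0 -> (1 < #|` B|)%N -> (#|` A| < #|` sumset A B|)%N.
Proof.
move=> A0 B2; have [m mA le_m] := fset_nat_max A0.
have [n nB le_n] : exists2 n, n \in B & forall b, b \in B -> (b <= n)%N.
  by apply: fset_nat_max; rewrite -cardfs_gt0; apply: ltnW.
have [b bB lt_bn] : exists2 b, b \in B & (b < n)%N.
  have : B `\ n != fset0 by rewrite -cardfs_gt0; move: B2; rewrite (cardfsD1 n) nB.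
  case/fset0Pn => b; rewrite !inE => /andP[bn bB].
  by exists b; rewrite // ltn_neqAle bn le_n.
pose Ab := [fset (a + b)%N | a in A].
have cardAb : #|` Ab| = #|` A| by rewrite card_imfset //= => x y /addIn.
have mn_notin : (m + n)%N \notin Ab.
  by apply/imfsetP => -[a aA]; have := le_m a aA; lia.
have sub : (m + n)%N |` Ab `<=` sumset A B.
  apply/fsubsetP => x /fset1UP [->|/imfsetP [a aA ->]]; apply/sumsetP.
    by exists m => //; exists n.
  by exists a => //; exists b.
by move/fsubset_leq_card: sub; rewrite cardfsU1 mn_notin cardAb.
Qed.

Lemma card_sumset_maxn_le1 (A B : {fset nat}) :
  #|` sumset A B| = maxn #|` A| #|` B| -> (#|` A| <= 1)%N \/ (#|` B| <= 1)%N.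
Proof.
move=> cardAB; case: (leqP #|` A| 1) => A2; [by left | right].
rewrite leqNgt; apply/negP => B2.
have gtA := card_sumset_gtl (A := A) _ B2; have gtB := card_sumset_gtl (A := B) _ A2.
rewrite sumsetC in gtB; rewrite -!cardfs_gt0 cardAB in gtA gtB; lia.
Qed.

Section WeakIASI.
Variables (V : finType) (adj : rel V).

Definition mono_edges (f : V -> {fset nat}) : {set {set V}} :=
  [set E : {set V} | is_edge adj E &&
     [exists u, exists v, (E == [set u; v]) && adj u v &&
        (#|` sumset (f u) (f v)| == 1%N)]].

Lemma mono_countE f : mono_count adj f = #|mono_edges f|.
Proof. by []. Qed.

Lemma mono_edges_mem f u v :
  adj u v -> #|` sumset (f u) (f v)| = 1%N -> [set u; v] \in mono_edges f.
Proof.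
move=> uv card1; rewrite inE; apply/andP; split.
  by apply/existsP; exists u; apply/existsP; exists v; rewrite uv eqxx.
by apply/existsP; exists u; apply/existsP; exists v; rewrite eqxx uv card1.
Qed.

Lemma mono_edges_card1 f u v :
  adj u v -> #|` f u| = 1%N -> #|` f v| = 1%N -> [set u; v] \in mono_edges f.
Proof.
move=> uv /eqP/cardfs1P[a fu] /eqP/cardfs1P[b fv].
by apply: mono_edges_mem; rewrite // fu fv sumset1 cardfs1.
Qed.

Definition triangle_edges (u v w : V) : {set {set V}} :=
  [set [set u; v]; [set v; w]; [set u; w]].

Hypothesis adj_irr : irreflexive adj.

Variable f : V -> {fset nat}.
Hypothesis f_weak : weak_iasi adj f.

Lemma weak_iasi_card_gt0 u v : adj u v -> (0 < #|` f u|)%N /\ (0 < #|` f v|)%N.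
Proof.
case: f_weak => -[f_inj _] f_max uv; rewrite !cardfs_gt0.
have empty_edge : f u = fset0 \/ f v = fset0 -> f u = f v.
  move=> f0; have := f_max u v uv.
  have -> : sumset (f u) (f v) = fset0 by case: f0 => ->; rewrite ?sumset0s ?sumsets0.
  rewrite cardfs0 => /esym/eqP; rewrite -leqn0 geq_max !leqn0 !cardfs_eq0.
  by case/andP=> /eqP-> /eqP->.
have neq_f : f u != f v by apply: contraTneq uv => /f_inj ->; rewrite adj_irr.
by split; apply/eqP => f0; move/eqP: neq_f; apply; apply: empty_edge; [left|right].
Qed.

Lemma weak_iasi_card_le1 u v : adj u v -> (#|` f u| <= 1)%N \/ (#|` f v| <= 1)%N.
Proof. by move=> uv; apply: card_sumset_maxn_le1; exact: f_weak.2. Qed.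

Lemma triangle_mono_edge u v w : adj u v -> adj v w -> adj u w ->
  exists2 E, E \in mono_edges f & E \in triangle_edges u v w.
Proof.
move=> uv vw uw; have [pu pv] := weak_iasi_card_gt0 uv.
have [_ pw] := weak_iasi_card_gt0 vw.
have le_uv := weak_iasi_card_le1 uv; have le_vw := weak_iasi_card_le1 vw.
have le_uw := weak_iasi_card_le1 uw.
case: (eqVneq #|` f u| 1%N) => [u1|/eqP u1]; case: (eqVneq #|` f v| 1%N) => [v1|/eqP v1].
- by exists [set u; v]; rewrite ?mono_edges_card1 // !inE eqxx.
- exists [set u; w]; last by rewrite !inE eqxx !orbT.
  by apply: mono_edges_card1 => //; lia.
- exists [set v; w]; last by rewrite !inE eqxx !orbT.
  by apply: mono_edges_card1 => //; lia.
- lia.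
Qed.

Lemma card_le_mono_count_triangles (I : finType) (x y z : I -> V) :
  (forall i, [/\ adj (x i) (y i), adj (y i) (z i) & adj (x i) (z i)]) ->
  (forall i j E, E \in triangle_edges (x i) (y i) (z i) ->
     E \in triangle_edges (x j) (y j) (z j) -> i = j) ->
  (#|I| <= mono_count adj f)%N.
Proof.
move=> tri disj.
pose in_mono_triangle i E := E \in mono_edges f /\ E \in triangle_edges (x i) (y i) (z i).
have [g g_mono] : exists g : I -> {set V}, forall i, in_mono_triangle i (g i).
  apply: (@fin_all_exists I (fun=> {set V})) => i; have [uv vw uw] := tri i.
  by have [E ? ?] := triangle_mono_edge uv vw uw; exists E.
have g_inj : injective g.
  move=> i j eq_g; apply: (disj i j (g i)); first by case: (g_mono i).
  by rewrite eq_g; case: (g_mono j).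
rewrite mono_countE -(card_imset _ g_inj); apply/subset_leq_card/subsetP.
by move=> _ /imsetP[i _ ->]; case: (g_mono i).
Qed.

End WeakIASI.

Lemma cardfs2S (n : nat) : #|` [fset n; n.+1]| = 2%N.
Proof. by rewrite cardfs2 ltn_eqF. Qed.

Lemma fset2S_inj (m n : nat) : [fset m; m.+1] = [fset n; n.+1] -> m = n.
Proof.
move=> eq_mn; have m_in : m \in [fset n; n.+1] by rewrite -eq_mn fset21.
have n_in : n \in [fset m; m.+1] by rewrite eq_mn fset21.
by move: m_in n_in; rewrite !inE; lia.
Qed.

Section Friendship.
Variable r : nat.
Local Notation V := 'I_(r.*2.+1).
Local Notation adj := (friendship_adj r).

Lemma friendship_adjE (u v : V) : adj u v = ((u : nat) != v) &&
  [|| (u : nat) == 0%N, (v : nat) == 0%N | (u : nat).-1./2 == (v : nat).-1./2].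
Proof. by []. Qed.

Lemma friendship_adj_irr : irreflexive adj.
Proof. by move=> u; rewrite friendship_adjE eqxx. Qed.

Definition hub : V := ord0.
Definition blade1 (k : 'I_r) : V := inord k.*2.+1.
Definition blade2 (k : 'I_r) : V := inord k.*2.+2.

Lemma blade1E k : blade1 k = k.*2.+1 :> nat.
Proof. by rewrite inordK //; have := ltn_ord k; lia. Qed.

Lemma blade2E k : blade2 k = k.*2.+2 :> nat.
Proof. by rewrite inordK //; have := ltn_ord k; lia. Qed.

Lemma friendship_triangle k :
  [/\ adj hub (blade1 k), adj (blade1 k) (blade2 k) & adj hub (blade2 k)].
Proof. by rewrite !friendship_adjE blade1E blade2E /=; split; lia. Qed.

Lemma friendship_triangle_edges_index k E :
  E \in triangle_edges hub (blade1 k) (blade2 k) ->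
  (exists2 b : V, b \in E & (b : nat) != 0%N) /\
  (forall b : V, b \in E -> (b : nat) != 0%N -> (b : nat).-1./2 = k).
Proof.
have idx b : b \in [:: blade1 k; blade2 k] -> (b : nat).-1./2 = k.
  by rewrite !inE => /orP[]/eqP->; rewrite ?blade1E ?blade2E /=; lia.
rewrite !inE => /orP[/orP[]|] /eqP->; split=> [|b]; rewrite ?inE;
  first [ by exists (blade1 k); rewrite ?inE ?eqxx ?orbT ?blade1E
        | by exists (blade2 k); rewrite ?inE ?eqxx ?orbT ?blade2E
        | by move=> /orP[]/eqP-> //; rewrite idx ?inE ?eqxx ?orbT ].
Qed.

Lemma friendship_triangles_disjoint k k' E :
  E \in triangle_edges hub (blade1 k) (blade2 k) ->
  E \in triangle_edges hub (blade1 k') (blade2 k') -> k = k'.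
Proof.
move=> /friendship_triangle_edges_index[[b bE b0] idx] /friendship_triangle_edges_index[_ idx'].
by apply: val_inj => /=; rewrite -(idx b bE b0) (idx' b bE b0).
Qed.

Lemma friendship_mono_count_ge f : weak_iasi adj f -> (r <= mono_count adj f)%N.
Proof.
move=> f_weak; rewrite -[X in (X <= _)%N]card_ord.
apply: (card_le_mono_count_triangles friendship_adj_irr f_weak (x := fun=> hub)).
  exact: friendship_triangle.
exact: friendship_triangles_disjoint.
Qed.

Definition friendship_label (v : V) : {fset nat} :=
  if (v : nat) == 0%N then [fset 0%N; 1%N] else [fset (v : nat)].

Lemma friendship_adj_blades (u v : V) :
  (u : nat) != 0%N -> (v : nat) != 0%N -> adj u v ->
  exists k, [set u; v] = [set blade1 k; blade2 k] /\ (u + v = k.*2.+1 + k.*2.+2)%N.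
Proof.
move=> u0 v0 uv; have lt_kr : ((u : nat).-1./2 < r)%N by have := ltn_ord u; lia.
have [k kE] : exists k : 'I_r, (k : nat) = (u : nat).-1./2 by exists (Ordinal lt_kr).
exists k; have : (u == blade1 k) && (v == blade2 k) || (u == blade2 k) && (v == blade1 k).
  rewrite -!(inj_eq val_inj) /= blade1E blade2E.
  by move: uv; rewrite friendship_adjE; lia.
by case/orP=> /andP[/eqP-> /eqP->]; rewrite blade1E blade2E // setUC addnC.
Qed.

Local Notation lab := friendship_label.

Lemma friendship_edge_sumset (u v : V) : adj u v ->
  (exists2 w : V, (w : nat) != 0%N &
     [set u; v] = [set hub; w] /\ sumset (lab u) (lab v) = [fset (w : nat); (w : nat).+1])
  \/ (exists k, [set u; v] = [set blade1 k; blade2 k] /\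
     sumset (lab u) (lab v) = [fset (k.*2.+1 + k.*2.+2)%N]).
Proof.
move=> uv; have u_neq_v : (u : nat) != v by case/andP: uv.
case: (eqVneq (u : nat) 0%N) => [u0|u0]; last case: (eqVneq (v : nat) 0%N) => [v0|v0].
- have v0 : (v : nat) != 0%N by rewrite -u0 eq_sym.
  left; exists v; rewrite // /friendship_label u0 (negbTE v0) sumset01.
  by have -> : u = hub by apply: val_inj.
- left; exists u; rewrite // /friendship_label v0 (negbTE u0) sumsetC sumset01 setUC.
  by have -> : v = hub by apply: val_inj.
- right; have [k [E sum_uv]] := friendship_adj_blades u0 v0 uv.
  by exists k; rewrite /friendship_label (negbTE u0) (negbTE v0) sumset1 sum_uv.
Qed.

Lemma friendship_label_inj : injective lab.
Proof.
move=> u v; rewrite /friendship_label.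
case: eqP => u0; case: eqP => v0 eq_uv; apply: ord_inj.
- by rewrite u0 v0.
- by move: eq_uv => /(congr1 (fun A => #|` A|)); rewrite cardfs2 cardfs1.
- by move: eq_uv => /(congr1 (fun A => #|` A|)); rewrite cardfs2 cardfs1.
- exact: fset1_inj eq_uv.
Qed.

Lemma friendship_label_sumset_inj (u v u' v' : V) : adj u v -> adj u' v' ->
  sumset (lab u) (lab v) = sumset (lab u') (lab v') -> [set u; v] = [set u'; v'].
Proof.
move=> /friendship_edge_sumset[[w w0 [-> ->]]|[k [-> ->]]]
       /friendship_edge_sumset[[w' w0' [-> ->]]|[k' [-> ->]]] eq_sum.
- by congr [set _; _]; apply/val_inj/fset2S_inj.
- by move: eq_sum => /(congr1 (fun A => #|` A|)); rewrite cardfs2S cardfs1.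
- by move: eq_sum => /(congr1 (fun A => #|` A|)); rewrite cardfs2S cardfs1.
- have -> // : k = k'.
  by apply/val_inj; move/fset1_inj: eq_sum => /=; lia.
Qed.

Lemma card_sumset_friendship_label (u v : V) : adj u v ->
  #|` sumset (lab u) (lab v)| = maxn #|` lab u| #|` lab v|.
Proof.
rewrite friendship_adjE => /andP[u_neq_v _]; rewrite /friendship_label.
case: eqP => u0; case: eqP => v0.
- by move: u_neq_v; rewrite u0 v0.
- by rewrite sumset01 cardfs2S cardfs2 cardfs1.
- by rewrite sumsetC sumset01 cardfs2S cardfs2 cardfs1.
- by rewrite sumset1 !cardfs1.
Qed.

Lemma friendship_label_weak : weak_iasi adj lab.
Proof.
split; last exact: card_sumset_friendship_label.
by split; [exact: friendship_label_inj | exact: friendship_label_sumset_inj].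
Qed.

Lemma friendship_mono_count_label : (mono_count adj lab <= r)%N.
Proof.
rewrite -[X in (_ <= X)%N]card_ord.
apply: (leq_trans _ (leq_imset_card (fun k => [set blade1 k; blade2 k]) _)).
rewrite mono_countE; apply/subset_leq_card/subsetP => E.
rewrite inE => /andP[_ /existsP[u /existsP[v /andP[/andP[/eqP-> uv] /eqP card1]]]].
case/friendship_edge_sumset: uv card1 => [[w _ [_ ->]]|[k [-> _]] _].
  by rewrite cardfs2S.
exact: imset_f.
Qed.

End Friendship.

Theorem corollary2p16 (r : nat) (hr : (2 <= r)%N) :
  (exists f, weak_iasi (friendship_adj r) f) /\
  is_sparing_number (friendship_adj r) r.
Proof.
have lab_weak := @friendship_label_weak r.
split; first by exists (@friendship_label r).
split; last by move=> f; exact: friendship_mono_count_ge.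
exists (@friendship_label r); split => //.
by apply/eqP; rewrite eqn_leq friendship_mono_count_label friendship_mono_count_ge.
Qed.
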